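(* Let $\mathcal{H}$ be a real Hilbert space, let $A\colon \mathcal{H}\rightrightarrows\mathcal{H}$ be maximally monotone and $m$-strongly monotone, let $B\colon \mathcal{H}\to\mathcal{H}$ be monotone and $L$-Lipschitz continuous, and suppose $(A+B)^{-1}(0)\neq\varnothing$. Let $\lambda\in\left(0,\frac{1}{2L}\right)$. Given $x_0,x_{-1}\in\mathcal{H}$, define the sequence $(x_k)$ by $$x_{k+1} = J_{\lambda A}\bigl( x_k - 2\lambda B(x_k) +\lambda B(x_{k-1}) \bigr) \quad\forall k\in\mathbb{N}.$$ Then $(A+B)^{-1}(0)$ consists of a single point and $(x_k)$ converges $R$-linearly to it.
   Context: $J_{\lambda A}:=(I+\lambda A)^{-1}$ is the resolvent. $A$ is $m$-strongly monotone if $m>0$ and $\langle x-y,u-v\rangle\geq m\|x-y\|^2$ for all $(x,u),(y,v)$ in the graph of $A$. A sequence $(x_k)$ converges $R$-linearly to $x^*$ if there exist $C\geq 0$ and $q\in(0,1)$ with $\|x_k-x^*\|\leq Cq^k$ for all $k$. *)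

(* A real Hilbert space is a complete normed module
   over a realType R whose norm is induced by an inner product. *)
From HB Require Import structures.
From mathcomp Require Import all_boot all_order all_algebra.
From mathcomp Require Import all_classical all_reals all_analysis.
Set Implicit Arguments. Unset Strict Implicit. Unset Printing Implicit Defensive.
Import Order.TTheory GRing.Theory Num.Theory.
Import numFieldNormedType.Exports.
Local Open Scope ring_scope.
Local Open Scope classical_set_scope.

Record is_inner_product (R : realType) (V : normedModType R)
    (ip : V -> V -> R) : Prop := {
  ip_sym : forall x y, ip x y = ip y x;
  ip_linear : forall a x y z, ip (a *: x + y) z = a * ip x z + ip y z;
  ip_norm : forall x, `|x| ^+ 2 = ip x x
}.

Definition monotone_op (R : realType) (V : normedModType R) (ip : V -> V -> R)
  (A : V -> set V) : Prop :=
  forall x y u v, A x u -> A y v -> 0 <= ip (x - y) (u - v).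

Definition maximally_monotone (R : realType) (V : normedModType R)
  (ip : V -> V -> R) (A : V -> set V) : Prop :=
  monotone_op ip A /\
  forall x u, (forall y v, A y v -> 0 <= ip (x - y) (u - v)) -> A x u.

Definition strongly_monotone (R : realType) (V : normedModType R)
  (ip : V -> V -> R) (m : R) (A : V -> set V) : Prop :=
  0 < m /\ forall x y u v, A x u -> A y v -> m * `|x - y| ^+ 2 <= ip (x - y) (u - v).

Definition monotone_fun (R : realType) (V : normedModType R)
  (ip : V -> V -> R) (B : V -> V) : Prop :=
  forall x y, 0 <= ip (x - y) (B x - B y).

Definition lipschitz_with (R : realType) (V : normedModType R) (L : R) (B : V -> V) : Prop :=
  forall x y, `|B x - B y| <= L * `|x - y|.

Definition resolvent (R : realType) (V : normedModType R) (lam : R)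
  (A : V -> set V) : V -> set V :=
  fun y => [set x | exists u, A x u /\ y = x + lam *: u].

Definition zeros_sum (R : realType) (V : normedModType R)
  (A : V -> set V) (B : V -> V) : set V :=
  [set z | A z (- B z)].

Definition R_linear_conv (R : realType) (V : normedModType R) (x : nat -> V) (z : V) : Prop :=
  exists C q : R, 0 <= C /\ 0 < q < 1 /\ forall k, `|x k - z| <= C * q ^+ k.

(** The iteration is forward-reflected-backward splitting.  For a zero [z] of
   [A + B], the quantity
     E(x_k, x_{k-1}) = |x_k - z|^2 - 2 lam <x_k - z, B x_k - B x_{k-1}>
                       + lam L |x_k - x_{k-1}|^2
   dominates |x_k - z|^2 / 2 because [2 lam L < 1].  Strong monotonicity of [A]
   at x_{k+1} and z, monotonicity of [B] and the Lipschitz bound on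
   B x_k - B x_{k-1} give E(x_{k+1}, x_k) <= E(x_k, x_{k-1}) with a gain of
   [2 lam m |x_{k+1} - z|^2] on the left, which buys a fixed factor [c > 1]:
   c E(x_{k+1}, x_k) <= E(x_k, x_{k-1}).  Hence |x_k - z|^2 decays like c^-k.
   Uniqueness of the zero is immediate from strong monotonicity. *)

From HB Require Import structures.
From mathcomp Require Import all_boot all_order all_algebra.
From mathcomp Require Import all_classical all_reals all_analysis.
From mathcomp Require Import ring lra.
Set Implicit Arguments. Unset Strict Implicit. Unset Printing Implicit Defensive.
Import Order.TTheory GRing.Theory Num.Theory.
Import numFieldNormedType.Exports.
Local Open Scope ring_scope.
Local Open Scope classical_set_scope.

Lemma contraction_factor (R : realFieldType) (s t : R) :
  0 < s -> 0 <= t -> 2 * t < 1 ->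
  exists2 c, 1 < c & forall P Q I : R, 0 <= P -> 0 <= Q -> `|I| <= t * (P + Q) ->
    c * (P - I + t * Q) <= (1 + 2 * s) * P - I + (1 - t) * Q.
Proof.
move=> s_gt0 t_ge0 t_lt; pose eps := Num.min s ((1 - 2 * t) / 2).
have eps_s : eps <= s by rewrite ge_min lexx.
have eps_t : eps <= (1 - 2 * t) / 2 by rewrite ge_min lexx orbT.
have eps_gt0 : 0 < eps by rewrite lt_min s_gt0 divr_gt0 // subr_gt0.
exists (1 + eps) => [|P Q I P_ge0 Q_ge0]; first lra.
rewrite ler_norml => /andP[I_lo _].
have et_s : eps * t <= s / 2 by apply: ler_pM; lra.
have et_t : eps * t <= (1 - 2 * t) / 2 * (1 / 2) by apply: ler_pM; lra.
have eI := ler_wpM2l (ltW eps_gt0) I_lo.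
have gainP : 0 <= (2 * s - eps - eps * t) * P by apply: mulr_ge0; lra.
have gainQ : 0 <= (1 - 2 * t - 2 * (eps * t)) * Q by apply: mulr_ge0; lra.
nra.
Qed.

Lemma contraction_le_geometric (R : realFieldType) (c : R) (u : nat -> R) :
  0 < c -> (forall n, c * u n.+1 <= u n) -> forall n, u n <= u 0 * c^-1 ^+ n.
Proof.
move=> c_gt0 contr; elim=> [|n IHn]; first by rewrite mulr1.
have := contr n; rewrite -ler_pdivlMl // => un1.
by rewrite exprSr mulrA mulrC (le_trans un1) // ler_pM2l ?invr_gt0.
Qed.

Lemma R_linear_conv_sqr (R : realType) (V : normedModType R) (x : nat -> V)
    (z : V) (D r : R) :
  0 <= D -> 0 < r < 1 -> (forall k, `|x k - z| ^+ 2 <= D * r ^+ k) ->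
  R_linear_conv x z.
Proof.
move=> D_ge0 /andP[r_gt0 r_lt1] bound.
exists (Num.sqrt D), (Num.sqrt r); split; first exact: sqrtr_ge0.
split=> [|k].
  by rewrite sqrtr_gt0 r_gt0 -sqrtr1 ltr_sqrt.
rewrite -(@ler_pXn2r _ 2) // ?nnegrE ?mulr_ge0 ?exprn_ge0 ?sqrtr_ge0 //.
by rewrite exprMn -exprM mulnC exprM !sqr_sqrtr // ltW.
Qed.

Section InnerProduct.
Variables (R : realType) (V : normedModType R) (ip : V -> V -> R).
Hypothesis ipP : is_inner_product ip.

Lemma ipDl x y z : ip (x + y) z = ip x z + ip y z.
Proof. by have := ip_linear ipP 1 x y z; rewrite scale1r mul1r. Qed.

Lemma ip0l z : ip 0 z = 0.
Proof. by have := ipDl 0 0 z; rewrite addr0; lra. Qed.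

Lemma ipZl a x z : ip (a *: x) z = a * ip x z.
Proof. by have := ip_linear ipP a x 0 z; rewrite !addr0 ip0l addr0. Qed.

Lemma ipNl x z : ip (- x) z = - ip x z.
Proof. by rewrite -scaleN1r ipZl mulN1r. Qed.

Lemma ipBl x y z : ip (x - y) z = ip x z - ip y z.
Proof. by rewrite ipDl ipNl. Qed.

Lemma ipDr x y z : ip z (x + y) = ip z x + ip z y.
Proof. by rewrite ip_sym // ipDl !(ip_sym ipP _ z). Qed.

Lemma ipZr a x z : ip z (a *: x) = a * ip z x.
Proof. by rewrite ip_sym // ipZl (ip_sym ipP x). Qed.

Lemma ipNr x z : ip z (- x) = - ip z x.
Proof. by rewrite ip_sym // ipNl (ip_sym ipP x). Qed.

Lemma ipBr x y z : ip z (x - y) = ip z x - ip z y.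
Proof. by rewrite ipDr ipNr. Qed.

Lemma ip_normD x y : `|x + y| ^+ 2 = `|x| ^+ 2 + 2 * ip x y + `|y| ^+ 2.
Proof. by rewrite !(ip_norm ipP) ipDl !ipDr (ip_sym ipP y x); ring. Qed.

Lemma ip_normB x y : `|x - y| ^+ 2 = `|x| ^+ 2 - 2 * ip x y + `|y| ^+ 2.
Proof. by rewrite ip_normD ipNr normrN; ring. Qed.

Lemma normr_ip_le x y : 2 * `|ip x y| <= `|x| ^+ 2 + `|y| ^+ 2.
Proof.
have := sqr_ge0 `|x + y|; have := sqr_ge0 `|x - y|.
rewrite ip_normB ip_normD; case: (ler0P (ip x y)) => _; lra.
Qed.

Lemma normr_ip_le_lipschitz (L : R) (x x' y : V) : 0 < L -> `|y| <= L * `|x'| ->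
  2 * `|ip x y| <= L * (`|x| ^+ 2 + `|x'| ^+ 2).
Proof.
move=> L_gt0 y_le; rewrite -(ler_pM2l L_gt0).
have y2_le : `|y| ^+ 2 <= L ^+ 2 * `|x'| ^+ 2.
  by rewrite -exprMn ler_pXn2r ?nnegrE // (le_trans _ y_le).
have := normr_ip_le (L *: x) y.
by rewrite ipZl normrM normrZ gtr0_norm // exprMn; lra.
Qed.

Lemma ip_bounds_lipschitz (L : R) (x x' y : V) : 0 < L -> `|y| <= L * `|x'| ->
  - (L * (`|x| ^+ 2 + `|x'| ^+ 2)) <= 2 * ip x y <= L * (`|x| ^+ 2 + `|x'| ^+ 2).
Proof.
move=> L_gt0 y_le; rewrite -ler_norml normrM gtr0_norm //.
exact: normr_ip_le_lipschitz.
Qed.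

End InnerProduct.

Section ForwardReflectedBackward.
Variables (R : realType) (V : normedModType R) (ip : V -> V -> R).
Variables (A : V -> set V) (B : V -> V) (m L lam : R).
Hypotheses (ipP : is_inner_product ip) (smA : strongly_monotone ip m A).
Hypotheses (monoB : monotone_fun ip B) (L_gt0 : 0 < L) (lipB : lipschitz_with L B).
Hypothesis lam_gt0 : 0 < lam.

Lemma zeros_sum_unique z z' : zeros_sum A B z -> zeros_sum A B z' -> z = z'.
Proof.
move=> zz z'z; have := smA.2 _ _ _ _ zz z'z; have := monoB z z'.
rewrite !(ipBr ipP) !(ipNr ipP) => mono sm.
have sqr_le0 : `|z - z'| ^+ 2 <= 0 by rewrite -(pmulr_rle0 _ smA.1); lra.
by apply/eqP; rewrite -subr_eq0 -normr_eq0 -sqrf_eq0 eq_le sqr_le0 sqr_ge0.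
Qed.

Definition frb_energy (z v w : V) : R :=
  `|v - z| ^+ 2 - 2 * lam * ip (v - z) (B v - B w) + lam * L * `|v - w| ^+ 2.

Lemma frb_energy_ge (z v w : V) :
  2 * (lam * L) <= 1 -> `|v - z| ^+ 2 <= 2 * frb_energy z v w.
Proof.
move=> lamL; rewrite /frb_energy.
have /andP[_ ip_le] := ip_bounds_lipschitz ipP (v - z) L_gt0 (lipB v w).
have := ler_wpM2l (ltW lam_gt0) ip_le.
have := sqr_ge0 `|v - z|; have := sqr_ge0 `|v - w|; nra.
Qed.

Lemma frb_descent (z u v w a : V) :
  zeros_sum A B z -> A u a -> v - 2 * lam *: B v + lam *: B w = u + lam *: a ->
  (1 + 2 * lam * m) * `|u - z| ^+ 2 - 2 * lam * ip (u - z) (B u - B v)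
    + (1 - lam * L) * `|u - v| ^+ 2 <= frb_energy z v w.
Proof.
move=> zz Aua step; rewrite /frb_energy.
have vz : (u - z) - (u - v) = v - z by rewrite opprB addrC subrKA.
have sm := ler_wpM2l (ltW lam_gt0) (smA.2 _ _ _ _ Aua zz).
have mono := mulr_ge0 (ltW lam_gt0) (monoB u z).
have /andP[ip_ge _] := ip_bounds_lipschitz ipP (u - v) L_gt0 (lipB v w).
have cross := ler_wpM2l (ltW lam_gt0) ip_ge.
have dist_vz : `|v - z| ^+ 2 = `|u - z| ^+ 2 - 2 * ip (u - z) (u - v) + `|u - v| ^+ 2.
  by rewrite -vz (ip_normB ipP).
have ip_vz : ip (v - z) (B v - B w) = ip (u - z) (B v - B w) - ip (u - v) (B v - B w).
  by rewrite -vz (ipBl ipP).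
have := congr1 (ip (u - z)) step.
rewrite dist_vz ip_vz !(ipDr ipP, ipNr ipP, ipZr ipP) in sm mono cross * => step_ip.
lra.
Qed.

Lemma frb_energy_contraction : 2 * (lam * L) < 1 ->
  exists2 c, 1 < c & forall z u v w a, zeros_sum A B z -> A u a ->
    v - 2 * lam *: B v + lam *: B w = u + lam *: a ->
    c * frb_energy z u v <= frb_energy z v w.
Proof.
move=> lamL.
have [c c_gt1 gain] := contraction_factor (mulr_gt0 lam_gt0 smA.1)
  (ltW (mulr_gt0 lam_gt0 L_gt0)) lamL.
exists c => // z u v w a zz Aua step.
have descent := frb_descent zz Aua step.
have I_le : `|2 * lam * ip (u - z) (B u - B v)|
    <= lam * L * (`|u - z| ^+ 2 + `|u - v| ^+ 2).
  rewrite normrM gtr0_norm ?mulr_gt0 // [2 * lam]mulrC -!mulrA ler_pM2l //.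
  exact: normr_ip_le_lipschitz.
have := gain _ _ _ (sqr_ge0 _) (sqr_ge0 _) I_le.
rewrite /frb_energy in descent *; lra.
Qed.

Lemma frb_R_linear_conv (z : V) (y : nat -> V) :
  2 * (lam * L) < 1 -> zeros_sum A B z ->
  (forall n, resolvent lam A (y n.+1 - 2 * lam *: B (y n.+1) + lam *: B (y n)) (y n.+2)) ->
  R_linear_conv (fun n => y n.+1) z.
Proof.
move=> lamL zz yrec.
have [c c_gt1 contr] := frb_energy_contraction lamL.
pose E n := frb_energy z (y n.+1) (y n).
have E_decay n : E n <= E 0 * c^-1 ^+ n.
  apply: contraction_le_geometric => [|{}n]; first lra.
  by have [a [Aa step]] := yrec n; exact: contr Aa step.
have dist_le n : `|y n.+1 - z| ^+ 2 <= 2 * E n by apply: frb_energy_ge; lra.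
apply: (@R_linear_conv_sqr _ _ _ _ (2 * E 0) c^-1) => [|| k].
- by have := dist_le 0; have := sqr_ge0 `|y 1 - z|; lra.
- by rewrite invr_gt0 invf_lt1 ?c_gt1; lra.
- by rewrite -mulrA (le_trans (dist_le k)) // ler_pM2l ?E_decay.
Qed.

End ForwardReflectedBackward.

Theorem theorem2p9 (R : realType) (V : completeNormedModType R)
  (ip : V -> V -> R) (A : V -> set V) (B : V -> V) (m L lam : R)
  (xm1 : V) (x : nat -> V) :
  is_inner_product ip ->
  maximally_monotone ip A ->
  strongly_monotone ip m A ->
  monotone_fun ip B ->
  0 < L -> lipschitz_with L B ->
  zeros_sum A B !=set0 ->
  0 < lam -> lam < 1 / (2 * L) ->
  resolvent lam A (x 0 - 2 * lam *: B (x 0) + lam *: B xm1) (x 1) ->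
  (forall k, resolvent lam A (x k.+1 - 2 * lam *: B (x k.+1) + lam *: B (x k)) (x k.+2)) ->
  exists z, zeros_sum A B = [set z] /\ R_linear_conv x z.
Proof.
(* Maximal monotonicity (with completeness) only makes J_{lam A} single-valued
   and everywhere defined; here the iterates are given. *)
move=> ipP _ smA monoB L_gt0 lipB [z zz] lam_gt0 lam_lt x1 xrec.
have lamL : 2 * (lam * L) < 1.
  by move: lam_lt; rewrite ltr_pdivlMr ?mulr_gt0 // mulrCA.
exists z; split.
  by apply/seteqP; split=> [z' /(zeros_sum_unique ipP smA monoB zz) <-|_ ->].
pose y n := if n is k.+1 then x k else xm1.
have yrec n : resolvent lam A (y n.+1 - 2 * lam *: B (y n.+1) + lam *: B (y n)) (y n.+2).
  by case: n.
exact: (frb_R_linear_conv ipP smA monoB L_gt0 lipB lam_gt0 lamL zz yrec).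
Qed.
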